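(* Let $X$ be a finite set, let $\emptyset \neq A \subseteq B \subseteq 2^X$, and let $X_p$ be a random subset of $X$ with distribution $\mu_p$. Let $K$ be a constant such that for every finite set $Y$ and every nontrivial upper set $\mathcal{F}\subseteq 2^Y$ one has $p_c(\mathcal{F}) \le K\, q(\mathcal{F}) \log \ell(\mathcal{F})$ (such a universal constant exists by the Park-Pham theorem). Then for $p\in(0,1)$, $$\mathbb{P}\big(X_p \in A \mid X_p \in B\big) > \tfrac{1}{2}\, r_{A,B}(p)$$ whenever $p > K\, q(\langle A \rangle)\log \ell(\langle A \rangle)$.
   Context: For $p\in[0,1]$, $\mu_p$ is the product measure on $2^X$: $\mu_p(S)=p^{|S|}(1-p)^{|X|-|S|}$ for $S\subseteq X$, extended to families by $\mu_p(\mathcal{F})=\sum_{S\in\mathcal{F}}\mu_p(S)$. A property $\mathcal{F}\subseteq 2^X$ is an upper set if $S\in\mathcal{F}$, $S\subseteq T$ imply $T\in\mathcal{F}$, and nontrivial if $\mathcal{F}\ne\emptyset,2^X$. The critical probability $p_c(\mathcal{F})$ of a nontrivial upper set is the unique $p$ with $\mu_p(\mathcal{F})=\frac12$. For $\mathcal{A}\subseteq 2^X$, $\langle \mathcal{A}\rangle=\{T\subseteq X: S\subseteq T\text{ for some }S\in\mathcal{A}\}$. A family $\mathcal{G}$ covers an upper set $\mathcal{F}$ if $\mathcal{F}\subseteq\bigcup_{S\in\mathcal{G}}\langle\{S\}\rangle$; $\mathcal{F}$ is $p$-small if some cover $\mathcal{G}$ has $\sum_{S\in\mathcal{G}}p^{|S|}\le\frac12$;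 $q(\mathcal{F})$ is the largest $p$ for which $\mathcal{F}$ is $p$-small. With $\mathcal{F}_0$ the set of inclusion-minimal elements of $\mathcal{F}$, $\ell_0(\mathcal{F})=\max\{|S|:S\in\mathcal{F}_0\}$ and $\ell(\mathcal{F})=\max\{\ell_0(\mathcal{F}),2\}$. For $\emptyset\ne A\subseteq B\subseteq 2^X$, $r_{A,B}(p)=\dfrac{\mathbb{P}(X_p\in A\mid X_p\in\langle A\rangle)}{\mathbb{P}(X_p\in B)}$. *)

From HB Require Import structures.
From mathcomp Require Import all_boot all_order all_algebra.
From mathcomp Require Import reals exp.
Set Implicit Arguments. Unset Strict Implicit. Unset Printing Implicit Defensive.
Import Order.TTheory GRing.Theory Num.Theory.
Local Open Scope ring_scope.

Section Defs.
Variables (R : realType) (X : finType).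

Definition mu (p : R) (S : {set X}) : R :=
  p ^+ #|S| * (1 - p) ^+ (#|X| - #|S|)%N.

Definition muF (p : R) (F : {set {set X}}) : R := \sum_(S in F) mu p S.

Definition condprob (p : R) (A B : {set {set X}}) : R :=
  muF p (A :&: B) / muF p B.

Definition upper_set (F : {set {set X}}) : Prop :=
  forall S T : {set X}, S \in F -> S \subset T -> T \in F.

Definition nontrivial (F : {set {set X}}) : Prop :=
  F != set0 /\ F != setT.

Definition upclosure (A : {set {set X}}) : {set {set X}} :=
  [set T : {set X} | [exists S in A, S \subset T]].

Definition is_critical_prob (F : {set {set X}}) (p : R) : Prop :=
  0 <= p <= 1 /\ muF p F = 2^-1.

Definition covers (G F : {set {set X}}) : Prop :=
  forall T, T \in F -> exists2 S, S \in G & S \subset T.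

Definition p_small (F : {set {set X}}) (p : R) : Prop :=
  exists G : {set {set X}}, covers G F /\ \sum_(S in G) p ^+ #|S| <= 2^-1.

Definition is_q (F : {set {set X}}) (q : R) : Prop :=
  0 <= q <= 1 /\ p_small F q /\ (forall p, 0 <= p <= 1 -> p_small F p -> p <= q).

Definition minimal_elt (F : {set {set X}}) (S : {set X}) : bool :=
  (S \in F) && [forall T in F, ((T : {set X}) \subset S) ==> (T == S)].

Definition ell0 (F : {set {set X}}) : nat := \max_(S | minimal_elt F S) #|S|.

Definition ell (F : {set {set X}}) : nat := maxn (ell0 F) 2.

Definition r_AB (A B : {set {set X}}) (p : R) : R :=
  condprob p A (upclosure A) / muF p B.

End Defs.

From HB Require Import structures.
From mathcomp Require Import all_boot all_order all_algebra.
From mathcomp Require Import reals exp.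
From mathcomp Require Import lra.
From mathcomp Require boolp filter num_topology subspace_topology normed_module derive.
Import Order.TTheory GRing.Theory Num.Theory num_topology.numFieldTopology.Exports.
Set Implicit Arguments. Unset Strict Implicit. Unset Printing Implicit Defensive.
Local Open Scope ring_scope.

(** Since [A] is contained in both [B] and [<A>], unfolding the definitions gives
    [P(A | B) = r_{A,B}(p) * mu_p(<A>)], so it suffices that [mu_p(<A>) > 1/2].
    The hypothesis on [K] applied to the upper set [<A>] puts every critical
    probability of [<A>] strictly below [p]. As [p |-> mu_p(<A>)] is a polynomial
    equal to [1] at [p = 1], a value [mu_p(<A>) <= 1/2] would produce, by the
    intermediate value theorem, a critical probability in [[p, 1]]. *)

Section ProductMeasure.
Variables (R : realType) (X : finType).
Implicit Types (p : R) (S : {set X}) (F : {set {set X}}).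

Lemma mu_gt0 p S : 0 < p < 1 -> 0 < mu p S.
Proof. by case/andP=> p0 p1; rewrite mulr_gt0 ?exprn_gt0 ?subr_gt0. Qed.

Lemma muF_gt0 p F : 0 < p < 1 -> F != set0 -> 0 < muF p F.
Proof.
move=> hp /set0Pn[S SF]; rewrite /muF (bigD1 S) //=.
by rewrite ltr_pwDl ?mu_gt0 ?sumr_ge0 // => T _; exact/ltW/mu_gt0.
Qed.

Lemma muF0 p : muF p (set0 : {set {set X}}) = 0.
Proof. by rewrite /muF big_set0. Qed.

(* Grouping the sets by size gives the binomial expansion of [(p + (1 - p))^|X|]. *)
Lemma muFT p : muF p [set: {set X}] = 1.
Proof.
rewrite /muF (partition_big (fun S => inord #|S| : 'I_#|X|.+1) predT) //=.
have card_lt S : (#|S| < #|X|.+1)%N by rewrite ltnS max_card.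
transitivity (\sum_(k < #|X|.+1) 'C(#|X|, k)%:R * (p ^+ k * (1 - p) ^+ (#|X| - k))).
  apply: eq_bigr => k _; rewrite -card_draws mulr_natl -sumr_const.
  apply: eq_big => [S|S /andP[_ /eqP <-]]; last by rewrite inordK.
  rewrite in_setT inE; apply/eqP/eqP => [<-|Sk]; first by rewrite inordK.
  by apply: val_inj; rewrite /= inordK ?Sk.
have := exprDn (1 - p) p #|X|; rewrite subrK expr1n => binom.
by rewrite [RHS]binom; apply: eq_bigr => k _; rewrite mulr_natl mulrC.
Qed.

Lemma muF1 F : [set: X] \in F -> muF (1 : R) F = 1.
Proof.
move=> FT; rewrite /muF (bigD1 [set: X]) //= big1 ?addr0.
  by rewrite /mu cardsT subnn mulr1 expr1n.
move=> S /andP[_ ST]; rewrite /mu subrr expr1n mul1r expr0n.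
case: eqP => // /eqP; rewrite subn_eq0 => XS.
by move: ST; rewrite eqEcard subsetT cardsT XS.
Qed.

Lemma muF_horner F :
  (fun p : R => muF p F) = horner (\sum_(S in F) 'X ^+ #|S| * (1 - 'X) ^+ (#|X| - #|S|)).
Proof.
apply: boolp.funext => p; rewrite horner_sum; apply: eq_bigr => S _.
by rewrite hornerM !hornerE.
Qed.

Lemma muF_continuous F : filter.continuous (fun p : R => muF p F).
Proof. by rewrite muF_horner; exact: derive.continuous_horner. Qed.

End ProductMeasure.

Section UpperSets.
Variables (R : realType) (X : finType).
Implicit Types (p : R) (A B F : {set {set X}}).

Lemma sub_upclosure A : A \subset upclosure A.
Proof. by apply/subsetP => S SA; rewrite inE; apply/existsP; exists S; rewrite SA subxx. Qed.

Lemma upclosure_upper A : upper_set (upclosure A).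
Proof.
move=> S T; rewrite !inE => /existsP[U /andP[UA US]] ST.
by apply/existsP; exists U; rewrite UA (subset_trans US).
Qed.

Lemma critical_prob_nontrivial F p : is_critical_prob F p -> nontrivial F.
Proof.
move=> [_ Fhalf]; split; apply/eqP=> Fe; move: Fhalf; rewrite {}Fe ?muF0 ?muFT; lra.
Qed.

Lemma critical_prob_above F p :
  upper_set F -> F != set0 -> F != setT -> 0 <= p <= 1 -> muF p F <= 2^-1 ->
  exists2 c, is_critical_prob F c & p <= c.
Proof.
move=> upF /set0Pn[S SF] FT /andP[p0 p1] Fp.
have F1 : muF (1 : R) F = 1 by apply: muF1; apply: (upF S) => //; exact: subsetT.
have between : Num.min (muF p F) (muF 1 F) <= 2^-1 <= Num.max (muF p F) (muF 1 F).
  by rewrite F1 ge_min Fp le_max; apply/orP; right; lra.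
have [c] := normed_module.IVT p1
  (subspace_topology.continuous_subspaceT (muF_continuous (F := F))) between.
rewrite in_itv /= => /andP[pc c1] Fc.
by exists c => //; split; rewrite ?(le_trans p0 pc) ?c1.
Qed.

Lemma half_lt_muF F p :
  upper_set F -> F != set0 -> 0 <= p <= 1 ->
  (forall c, is_critical_prob F c -> c < p) -> 2^-1 < muF p F.
Proof.
move=> upF F0 p01 below; have [->|FT] := eqVneq F setT; first by rewrite muFT; lra.
rewrite ltNge; apply/negP => /(critical_prob_above upF F0 FT p01) [c /below].
by rewrite ltNge => /negbTE ->.
Qed.

Lemma condprob_eq_r_AB_mul A B p :
  A \subset B -> muF p (upclosure A) != 0 ->
  condprob p A B = r_AB A B p * muF p (upclosure A).
Proof.
move=> AB F0; rewrite /r_AB /condprob (setIidPl AB) (setIidPl (sub_upclosure A)).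
by rewrite mulrAC divfK.
Qed.

Lemma r_AB_gt0 A B p : A != set0 -> A \subset B -> 0 < p < 1 -> 0 < r_AB A B p.
Proof.
move=> A0 AB p01; have AF := sub_upclosure A.
rewrite /r_AB /condprob (setIidPl AF).
by rewrite !divr_gt0 ?muF_gt0 ?(subset_neq0 AF) ?(subset_neq0 AB).
Qed.

End UpperSets.

Theorem lemma3p5 (R : realType) (K : R)
  (HK : forall (Y : finType) (F : {set {set Y}}) (pc qF : R),
          upper_set F -> nontrivial F ->
          is_critical_prob F pc -> is_q F qF ->
          pc <= K * qF * ln (ell F)%:R)
  (X : finType) (A B : {set {set X}}) (p : R) :
  A != set0 -> A \subset B -> 0 < p < 1 ->
  forall qA : R, is_q (upclosure A) qA ->
  K * qA * ln (ell (upclosure A))%:R < p ->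
  condprob p A B > 2^-1 * r_AB A B p.
Proof.
move=> A0 AB p01 qA qA_q p_large.
have below_p c : is_critical_prob (upclosure A) c -> c < p.
  move=> Fc; apply: le_lt_trans p_large.
  exact: HK (upclosure_upper (A := A)) (critical_prob_nontrivial Fc) Fc qA_q.
have F_half : 2^-1 < muF p (upclosure A).
  apply: half_lt_muF (upclosure_upper (A := A)) _ _ below_p.
    exact: subset_neq0 (sub_upclosure A) A0.
  by case/andP: p01 => p_gt0 p_lt1; rewrite !ltW.
rewrite (condprob_eq_r_AB_mul AB); last by apply: lt0r_neq0; lra.
by rewrite mulrC ltr_pM2l ?r_AB_gt0.
Qed.
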